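(* Let $Y_1,Y_2,\ldots$ be i.i.d. Bernoulli$(1/2)$ and let $(Z^k)_k$ be generated by the bit-drop scheme described in the context, independently of $(Y_i)$. For $0\le k\le n$ let $L^a_n(k)$ be the length of a longest common subsequence of $Z^k$ and $Y_1\ldots Y_n$. Let $$E^n_4:=\bigcap_{k=\lceil 0.45n\rceil}^{n}\{L^a_n(k)\geq 0.65k\}.$$ Then $\lim_{n\to\infty}P(E^n_4)=1$.
   Context: Bit-drop scheme: let $V_1,V_2,\ldots$ be i.i.d. Bernoulli$(1/2)$ and let $T_3,T_4,\ldots$ be independent, independent of $(V_k)$, with $T_{k+1}$ uniform on $\{2,\ldots,k\}$. Set $Z^2:=V_1V_2$ and, given $Z^k=Z^k_1\ldots Z^k_k$, define $Z^{k+1}_j:=Z^k_j$ for $j<T_{k+1}$, $Z^{k+1}_{T_{k+1}}:=V_{k+1}$, $Z^{k+1}_j:=Z^k_{j-1}$ for $T_{k+1}<j\le k+1$. *)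

From HB Require Import structures.
From mathcomp Require Import all_boot all_order all_algebra.
From mathcomp Require Import all_classical all_reals all_analysis.
Set Implicit Arguments. Unset Strict Implicit. Unset Printing Implicit Defensive.
Import Order.TTheory GRing.Theory Num.Theory.

Definition lcs (s t : seq bool) : nat :=
  \max_(m : (size s).-tuple bool | subseq (mask m s) t) size (mask m s).

(* V k = V_k (k >= 1), T k = T_k (k >= 3).
   Z^2 = V_1 V_2 ; Z^{k+1} is Z^k with V_{k+1} inserted at (1-based)
   position T_{k+1}.  For k <= 1 (not covered by the paper) we set
   Z^0 = empty word and Z^1 = V_1. *)
(* Zaux j = Z^{j+2} *)
Fixpoint Zaux (V : nat -> bool) (T : nat -> nat) (j : nat) : seq bool :=
  match j with
  | 0 => [:: V 1; V 2]
  | j'.+1 => let z := Zaux V T j' in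
             take (T j.+2).-1 z ++ V j.+2 :: drop (T j.+2).-1 z
  end.

Definition Zbd (V : nat -> bool) (T : nat -> nat) (k : nat) : seq bool :=
  match k with
  | 0 => [::]
  | 1 => [:: V 1]
  | k'.+2 => Zaux V T k'
  end.

(* Finite sample space for fixed n: Y_1..Y_n, V_1..V_n, and T_3..T_n
   (stored in a finite function on 'I_n.+1, with T_j = 0 for j < 3). *)
Definition sample (n : nat) : finType :=
  (n.-tuple bool * n.-tuple bool * {ffun 'I_n.+1 -> 'I_n.+1})%type.

(* T_j uniform on {2,...,j-1} for 3 <= j <= n; dummy value 0 elsewhere.
   The uniform law on the set of valid samples is exactly the product law of
   the independent uniform variables Y_i, V_i, T_j. *)
Definition validT n (T : {ffun 'I_n.+1 -> 'I_n.+1}) : bool :=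
  [forall j : 'I_n.+1,
     if 3 <= j then (2 <= T j) && (T j <= j.-1) else (T j == 0 :> nat)].

Definition Omega n : {set sample n} := [set w : sample n | validT w.2].

Definition Yseq n (w : sample n) : seq bool := w.1.1.
Definition Vfun n (w : sample n) : nat -> bool := fun i => nth false w.1.2 i.-1.
Definition Tfun n (w : sample n) : nat -> nat := fun i => nat_of_ord (w.2 (inord i)).

Definition La n (w : sample n) (k : nat) : nat :=
  lcs (Zbd (Vfun w) (Tfun w) k) (Yseq w).

(* E^n_4 = /\_{k = ceil(0.45 n)}^{n} { L^a_n(k) >= 0.65 k };
   ceil(0.45 n) <= k  <->  45 n <= 100 k, and L >= 0.65 k <-> 100 L >= 65 k. *)
Definition E4 n (w : sample n) : bool :=
  [forall k : 'I_n.+1, (45 * n <= 100 * k) ==> (65 * k <= 100 * La w k)].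

Definition PE4 (R : realType) (n : nat) : R :=
  (#|[set w in Omega n | E4 w]|%:R / #|Omega n|%:R)%R.

(* Cut Z^k and Y into consecutive blocks of 6 bits and concatenate longest
   common subsequences of corresponding blocks: this is a common subsequence of
   Z^k and Y, so its length G bounds L^a_n(k) from below.  Since Z^k is a
   permutation of the independent fair bits V_1 ... V_k, the blocks are
   independent uniform words, and E[x^G] is a power of the explicit generating
   polynomial of the LCS length of two uniform 6-bit words.  A Chernoff bound
   with x = 0.99^10 shows that P(L^a_n(k) < 0.65 k) decays geometrically in k;
   as k >= 0.45 n, a union bound over the at most n + 1 values of k gives
   P(not E^n_4) <= C (n + 1) rho^(n / 14), which tends to 0. *)

From mathcomp Require Import all_boot all_order all_algebra.
From mathcomp Require Import all_classical all_reals all_analysis.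
From mathcomp Require Import zify ring lra.
Import numFieldNormedType.Exports.
Set Implicit Arguments. Unset Strict Implicit. Unset Printing Implicit Defensive.
Import Order.TTheory GRing.Theory Num.Theory.

(* The usual dynamic-programming recursion.  Only the fact that it returns a
   common subsequence is proved; its length enters through the computation in
   [block_gf6E]. *)
Fixpoint lcs_seq (s t : seq bool) {struct s} : seq bool :=
  match s with
  | [::] => [::]
  | x :: s' =>
    let fix lcs_cons (t : seq bool) : seq bool :=
      match t with
      | [::] => [::]
      | y :: t' => if x == y then x :: lcs_seq s' t'
                   else let a := lcs_seq s' t in let b := lcs_cons t' in
                        if size b <= size a then a else b
      end in lcs_cons t
  end.

Lemma lcs_seq_cons x s y t : lcs_seq (x :: s) (y :: t) =
  if x == y then x :: lcs_seq s t else
  if size (lcs_seq (x :: s) t) <= size (lcs_seq s (y :: t))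
  then lcs_seq s (y :: t) else lcs_seq (x :: s) t.
Proof. by []. Qed.

Lemma lcs_seq_subseq s t : subseq (lcs_seq s t) s && subseq (lcs_seq s t) t.
Proof.
elim: s t => [|x s IHs] t; first by rewrite /= !sub0seq.
elim: t => [|y t IHt]; first by rewrite !sub0seq.
rewrite lcs_seq_cons; case: eqP => [<-|_].
  by case/andP: (IHs t) => sub_s sub_t; rewrite /= eqxx sub_s sub_t.
case: ifP => _.
  case/andP: (IHs (y :: t)) => sub_s ->; rewrite andbT.
  exact: subseq_trans sub_s (subseq_cons _ _).
case/andP: IHt => -> sub_t /=.
exact: subseq_trans sub_t (subseq_cons _ _).
Qed.

Lemma subseq_leq_lcs s t c : subseq c s -> subseq c t -> size c <= lcs s t.
Proof.
move=> /subseqP[m size_m ->] sub_t.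
have size_m' : size m == size s by apply/eqP.
exact: (leq_bigmax_cond (Tuple size_m') sub_t).
Qed.

Fixpoint block_lcs (b m : nat) (u y : seq bool) : seq bool :=
  if m is m'.+1 then lcs_seq (take b u) (take b y) ++ block_lcs b m' (drop b u) (drop b y)
  else [::].

Lemma block_lcs_subseq b m u y :
  subseq (block_lcs b m u y) u && subseq (block_lcs b m u y) y.
Proof.
elim: m u y => [|m IHm] u y /=; first by rewrite !sub0seq.
case/andP: (lcs_seq_subseq (take b u) (take b y)) => sub_u1 sub_y1.
case/andP: (IHm (drop b u) (drop b y)) => sub_u2 sub_y2.
have := cat_subseq sub_u1 sub_u2; have := cat_subseq sub_y1 sub_y2.
by rewrite !cat_take_drop => -> ->.
Qed.

Lemma block_lcs_take b m k u y :
  b * m <= k -> block_lcs b m (take k u) y = block_lcs b m u y.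
Proof.
elim: m k u y => [|m IHm] k u y //=; rewrite mulnS => le_k.
have le_bk : b <= k := leq_trans (leq_addr _ _) le_k.
by rewrite take_takel // -(subnK le_bk) -take_drop IHm // leq_subRL.
Qed.

Fixpoint bitseqs (n : nat) : seq (seq bool) :=
  if n is n'.+1 then map (cons true) (bitseqs n') ++ map (cons false) (bitseqs n')
  else [:: [::]].

Lemma mem_bitseqs n s : (s \in bitseqs n) = (size s == n).
Proof.
elim: n s => [|n IHn] [|b s] //=; rewrite mem_cat.
  by apply/negP => /orP[] /mapP[].
rewrite eqSS -IHn; apply/orP/idP => [[] /mapP[s' s'_in [_ ->]] //|s_in].
by case: b; [left | right]; apply: map_f.
Qed.

Lemma uniq_bitseqs n : uniq (bitseqs n).
Proof.
elim: n => //= n IHn; rewrite cat_uniq !map_inj_uniq ?IHn //=; try by move=> ? ? [].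
by rewrite andbT; apply/hasPn => _ /mapP[s _ ->]; apply/mapP => -[].
Qed.

Section BitseqSums.
Variable V : nmodType.
Local Open Scope ring_scope.

Lemma big_bitseqsD a c (F : seq bool -> V) :
  \sum_(s <- bitseqs (a + c)) F s = \sum_(u <- bitseqs a) \sum_(v <- bitseqs c) F (u ++ v).
Proof.
elim: a F => [|a IHa] F; first by rewrite /= big_seq1.
by rewrite addSn /= !big_cat !big_map !IHa.
Qed.

Lemma big_tuple_bitseqs n (F : seq bool -> V) :
  \sum_(t : n.-tuple bool) F t = \sum_(s <- bitseqs n) F s.
Proof.
rewrite -(big_map val xpredT F); apply: perm_big; apply: uniq_perm.
- by rewrite map_inj_uniq ?index_enum_uniq //; apply: val_inj.
- exact: uniq_bitseqs.
move=> s; rewrite mem_bitseqs; apply/mapP/eqP => [[t _ ->]|size_s].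
  exact: size_tuple.
have size_s' : size s == n by apply/eqP.
by exists (Tuple size_s'); rewrite ?mem_index_enum.
Qed.

End BitseqSums.

Section BlockGeneratingFunction.
Variable R : comPzRingType.
Local Open Scope ring_scope.

Definition block_gf b (x : R) :=
  \sum_(a <- bitseqs b) \sum_(c <- bitseqs b) x ^+ size (lcs_seq a c).

Lemma sum_block_lcs_exp b m r (x : R) :
  \sum_(u <- bitseqs (b * m + r)) \sum_(y <- bitseqs (b * m + r))
     x ^+ size (block_lcs b m u y) = block_gf b x ^+ m * 4%:R ^+ r.
Proof.
elim: m => [|m IHm].
  rewrite muln0 add0n mul1r -(big_tuple_bitseqs _ (fun u => \sum_(y <- _) _)).
  under eq_bigr do rewrite -(big_tuple_bitseqs _ (fun y => _ ^+ size (block_lcs _ _ _ y))) /=.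
  by rewrite !sumr_const card_tuple card_bool -mulrnA -expnMn natrX.
transitivity (\sum_(u1 <- bitseqs b) \sum_(u2 <- bitseqs (b * m + r))
    \sum_(y1 <- bitseqs b) \sum_(y2 <- bitseqs (b * m + r))
    x ^+ size (lcs_seq u1 y1) * x ^+ size (block_lcs b m u2 y2)).
  rewrite mulnS -addnA big_bitseqsD; apply: eq_big_seq => u1.
  rewrite mem_bitseqs => /eqP size_u1; apply: eq_bigr => u2 _.
  rewrite big_bitseqsD; apply: eq_big_seq => y1.
  rewrite mem_bitseqs => /eqP size_y1; apply: eq_bigr => y2 _.
  by rewrite /= !take_size_cat ?drop_size_cat // size_cat exprD.
rewrite exprS -mulrA -IHm /block_gf big_distrlr; apply: eq_bigr => u1 _.
by apply: eq_bigr => u2 _; rewrite big_distrlr.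
Qed.

Lemma block_gf6E (x : R) : block_gf 6 x = 2%:R + 28%:R * x + 190%:R * x ^+ 2
  + 824%:R * x ^+ 3 + 1902%:R * x ^+ 4 + 1086%:R * x ^+ 5 + 64%:R * x ^+ 6.
Proof.
rewrite /block_gf -(big_allpairs_dep (h := fun a c => size (lcs_seq a c)))
  -(perm_big _ (permEl (perm_sort leq _))).
have -> : sort leq [seq size (lcs_seq a c) | a <- bitseqs 6, c <- bitseqs 6] =
  nseq 2 0 ++ nseq 28 1 ++ nseq 190 2 ++ nseq 824 3 ++ nseq 1902 4 ++ nseq 1086 5
  ++ nseq 64 6 by vm_compute.
rewrite !big_cat !big_nseq !iter_addr_0 /=.
ring.
Qed.

End BlockGeneratingFunction.

Fixpoint Zaux_index (T : nat -> nat) (j : nat) : seq nat :=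
  match j with
  | 0 => [:: 0; 1]
  | j'.+1 => let z := Zaux_index T j' in
             take (T j.+2).-1 z ++ j.+1 :: drop (T j.+2).-1 z
  end.

Definition Zbd_index (T : nat -> nat) (k : nat) : seq nat :=
  match k with
  | 0 => [::]
  | 1 => [:: 0]
  | k'.+2 => Zaux_index T k'
  end.

Lemma Zbd_map V T k : Zbd V T k = map (fun i => V i.+1) (Zbd_index T k).
Proof.
have Zaux_map j : Zaux V T j = map (fun i => V i.+1) (Zaux_index T j).
  by elim: j => [|j IHj] //=; rewrite IHj map_cat map_take /= map_drop.
by case: k => [|[|k]] //=; rewrite Zaux_map.
Qed.

Lemma perm_Zbd_index T k : perm_eq (Zbd_index T k) (iota 0 k).
Proof.
case: k => [|[|j]] //; elim: j => [|j IHj] //; rewrite [Zbd_index _ _]/=.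
set t := (T j.+3).-1.
rewrite -[_ :: _](cat1s _ (drop t _)) perm_catCA cat_take_drop.
rewrite -[j.+3]addn1 iotaD add0n cats1 perm_sym perm_rcons perm_cons perm_sym.
exact: IHj.
Qed.

Lemma big_tuple_perm_take (V : nmodType) (A : finType) (x0 : A) n k (p : seq nat)
    (F : seq A -> V) :
  perm_eq p (iota 0 k) -> k <= n ->
  (\sum_(t : n.-tuple A) F (map (nth x0 t) p) = \sum_(t : n.-tuple A) F (take k t))%R.
Proof.
move=> perm_p le_kn.
pose q := p ++ iota k (n - k).
have perm_q : perm_eq q (iota 0 n).
  by rewrite /q -{2}(subnKC le_kn) iotaD add0n perm_cat2r.
have size_q : size q = n by rewrite (perm_size perm_q) size_iota.
pose h (t : n.-tuple A) : n.-tuple A := insubd t (map (nth x0 t) q).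
have hE t : tval (h t) = map (nth x0 t) q.
  by rewrite /h insubdK // -topredE /= size_map size_q.
have inj_h : injective h.
  move=> t1 t2 /(congr1 (@tval n A)); rewrite !hE => /eq_in_map eq_t.
  apply: val_inj; apply: (@eq_from_nth _ x0); first by rewrite !size_tuple.
  move=> i; rewrite size_tuple => lt_in.
  by apply: eq_t; rewrite (perm_mem perm_q) mem_iota.
rewrite [RHS](reindex_inj inj_h); apply: eq_bigr => t _.
by rewrite hE /q map_cat take_size_cat ?size_map // (perm_size perm_p) size_iota.
Qed.

Lemma card_bigcup_le (I : Type) (T : finType) (r : seq I) (P : pred I) (B : I -> {set T}) :
  #|\bigcup_(i <- r | P i) B i| <= \sum_(i <- r | P i) #|B i|.
Proof.
apply: (big_ind2 (fun (U : {set T}) s => #|U| <= s)) => [|U1 s1 U2 s2 le1 le2|] //.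
  by rewrite cards0.
exact: leq_trans (leq_card_setU _ _) (leq_add le1 le2).
Qed.

Lemma card_markov_expr (R : numDomainType) (F : finType) (A : {set F}) (P : pred F)
    (g : F -> nat) c (x : R) :
  (0 <= x <= 1)%R -> (forall w, w \in A -> P w -> g w <= c) ->
  (#|[set w in A | P w]|%:R * x ^+ c <= \sum_(w in A) x ^+ g w)%R.
Proof.
move=> /andP[x_ge0 x_le1] le_gc; rewrite -sumr_const mulr_suml.
rewrite (eq_bigl (fun w => (w \in A) && P w)) => [|w]; last by rewrite inE.
rewrite big_mkcondr /=; apply: ler_sum => w w_in; rewrite mul1r.
by case: ifP => [Pw|_]; [apply: ler_wiXn2l => //; apply: le_gc | apply: exprn_ge0].
Qed.

Lemma big_Omega (M : nmodType) n (G : sample n -> M) :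
  (\sum_(w in Omega n) G w =
   \sum_(T : {ffun 'I_n.+1 -> 'I_n.+1} | validT T)
     \sum_(Y : n.-tuple bool) \sum_(V : n.-tuple bool) G ((Y, V), T))%R.
Proof.
transitivity (\sum_(T : {ffun 'I_n.+1 -> 'I_n.+1}) \sum_(Y : n.-tuple bool)
    \sum_(V : n.-tuple bool) (if validT T then G ((Y, V), T) else 0))%R.
  rewrite [RHS]exchange_big; under [RHS]eq_bigr do rewrite exchange_big.
  rewrite /= pair_bigA pair_bigA big_mkcond; apply: eq_bigr => -[[Y V] T] _.
  by rewrite inE.
rewrite [RHS]big_mkcond; apply: eq_bigr => T _.
by case: validT => //; rewrite big1 // => Y _; rewrite big1.
Qed.

Section SampleSpace.
Variable R : pzSemiRingType.
Local Open Scope ring_scope.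

Lemma sum1_tuple_bool2 n :
  \sum_(Y : n.-tuple bool) \sum_(V : n.-tuple bool) 1 = 4%:R ^+ n :> R.
Proof. by rewrite !sumr_const card_tuple card_bool -mulrnA -expnMn natrX. Qed.

Lemma natr_card_Omega n :
  #|Omega n|%:R = \sum_(T : {ffun 'I_n.+1 -> 'I_n.+1} | validT T) 4%:R ^+ n :> R.
Proof.
rewrite -sumr_const big_Omega; apply: eq_bigr => T _; exact: sum1_tuple_bool2.
Qed.

End SampleSpace.

Definition La_block n (w : sample n) k :=
  size (block_lcs 6 (k %/ 6) (Zbd (Vfun w) (Tfun w) k) (Yseq w)).

Lemma La_block_le n (w : sample n) k : La_block w k <= La w k.
Proof.
case/andP: (block_lcs_subseq 6 (k %/ 6) (Zbd (Vfun w) (Tfun w) k) (Yseq w)).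
exact: subseq_leq_lcs.
Qed.

Lemma La_block_small n (w : sample n) k :
  100 * La w k < 65 * k -> 10 * La_block w k <= 39 * (k %/ 6).+1.
Proof.
have := La_block_le w k; have := leq_divM k 6.
have : k < (k %/ 6).+1 * 6 by rewrite ltn_ceil.
lia.
Qed.

Lemma card_Omega_gt0 n : 0 < #|Omega n|.
Proof.
apply/card_gt0P.
pose T := [ffun j : 'I_n.+1 => if 3 <= j then inord 2 else ord0 : 'I_n.+1].
exists ((nseq_tuple n false, nseq_tuple n false), T).
rewrite inE; apply/forallP => j /=; rewrite ffunE.
case: ifP => le3j; rewrite le3j //.
by have lt_jn := ltn_ord j; rewrite inordK ?leqnn /=; lia.
Qed.

Lemma card_Omega_le n : #|Omega n| <= #|[set w in Omega n | E4 w]| +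
  \sum_(k < n.+1 | 45 * n <= 100 * k) #|[set w in Omega n | 100 * La w k < 65 * k]|.
Proof.
apply: leq_trans (leq_add (leqnn _) (card_bigcup_le _ _ _)).
apply: leq_trans (leq_card_setU _ _); apply: subset_leq_card.
apply/fintype.subsetP => w w_in.
apply/setUP; case: (boolP (E4 w)) => [E4w | /forallPn[k]].
  by left; rewrite inE w_in.
rewrite negb_imply -ltnNge => /andP[le_nk small].
by right; apply/bigcupP; exists k; rewrite // inE w_in.
Qed.

Section Chernoff.
Variable R : realFieldType.
Local Open Scope ring_scope.

Lemma sum_Omega_La_block n k (x : R) : (k <= n)%N ->
  \sum_(w in Omega n) x ^+ La_block w k =
  #|Omega n|%:R * (block_gf 6 x / 4096%:R) ^+ (k %/ 6).
Proof.
move=> le_kn; set m := (k %/ 6)%N.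
have le_6m_k : (6 * m <= k)%N by rewrite mulnC leq_divM.
have sum_V Y T : \sum_(V : n.-tuple bool) x ^+ La_block ((Y, V), T) k =
    \sum_(V : n.-tuple bool) x ^+ size (block_lcs 6 m V Y).
  transitivity (\sum_(V : n.-tuple bool) x ^+ size (block_lcs 6 m
      (map (nth false V) (Zbd_index (fun i => T (inord i)) k)) Y)).
    by apply: eq_bigr => V _; rewrite /La_block Zbd_map.
  rewrite (big_tuple_perm_take (k := k) false (fun s => x ^+ size (block_lcs 6 m s Y)))
    ?perm_Zbd_index //.
  by apply: eq_bigr => V _; rewrite block_lcs_take.
rewrite big_Omega natr_card_Omega mulr_suml; apply: eq_bigr => T _.
under eq_bigr do rewrite sum_V.
rewrite exchange_big /= (big_tuple_bitseqs _
  (fun u => \sum_(Y : n.-tuple bool) x ^+ size (block_lcs 6 m u Y))).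
under eq_bigr do rewrite (big_tuple_bitseqs _ (fun y => x ^+ size (block_lcs 6 m _ y))).
rewrite -(subnKC (leq_trans le_6m_k le_kn)) sum_block_lcs_exp.
rewrite expr_div_n exprD exprM.
have -> : 4%:R ^+ 6 = 4096%:R :> R by rewrite -natrX.
by rewrite [RHS]mulrC -mulrA mulKf ?expf_neq0 ?pnatr_eq0.
Qed.

Lemma card_La_small_le n k (y : R) : (k <= n)%N -> 0 <= y <= 1 ->
  #|[set w in Omega n | (100 * La w k < 65 * k)%N]|%:R * y ^+ (39 * (k %/ 6).+1) <=
  #|Omega n|%:R * (block_gf 6 (y ^+ 10) / 4096%:R) ^+ (k %/ 6).
Proof.
move=> le_kn y01; rewrite -(sum_Omega_La_block _ le_kn).
under eq_bigr do rewrite -exprM.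
by apply: card_markov_expr => // w _; apply: La_block_small.
Qed.

(* Below 1: the mean LCS length of two uniform 6-bit words, 16302 / 4096,
   exceeds 0.65 * 6 = 3.9, and the Chernoff parameter 0.99^10 is close enough
   to 1 to exploit this margin. *)
Definition chernoff_rate : R :=
  block_gf 6 ((99 / 100) ^+ 10) / (4096%:R * (99 / 100) ^+ 39).

Lemma chernoff_rate_ge0 : 0 <= chernoff_rate.
Proof.
have y_ge0 : 0 <= 99 / 100 :> R by lra.
apply: divr_ge0; last by rewrite mulr_ge0 ?ler0n ?exprn_ge0.
by apply: sumr_ge0 => a _; apply: sumr_ge0 => c _; rewrite !exprn_ge0.
Qed.

Lemma chernoff_rate_lt1 : chernoff_rate < 1.
Proof.
have y_gt0 : 0 < 99 / 100 :> R by lra.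
rewrite ltr_pdivrMr ?mul1r ?mulr_gt0 ?ltr0n ?exprn_gt0 // block_gf6E.
lra.
Qed.

Lemma card_La_small n k : (k <= n)%N -> (45 * n <= 100 * k)%N ->
  #|[set w in Omega n | (100 * La w k < 65 * k)%N]|%:R <=
  #|Omega n|%:R * ((99 / 100) ^- 39 * chernoff_rate ^+ (n %/ 14)) :> R.
Proof.
move=> le_kn le_nk; have y_gt0 : 0 < 99 / 100 :> R by lra.
have y01 : 0 <= (99 / 100 : R) <= 1 by apply/andP; split; lra.
have := card_La_small_le le_kn y01.
rewrite -ler_pdivlMr ?exprn_gt0 // => /le_trans; apply.
rewrite -mulrA ler_wpM2l ?ler0n //.
have rate_powE (y A : R) m : y != 0 ->
    (A / 4096%:R) ^+ m / y ^+ (39 * m.+1) = y ^- 39 * (A / (4096%:R * y ^+ 39)) ^+ m.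
  move=> y_neq0; rewrite exprM exprS.
  have : y ^+ 39 != 0 by rewrite expf_neq0.
  move: (y ^+ 39) => b b_neq0; rewrite !expr_div_n exprMn.
  by field; rewrite ?expf_neq0 ?pnatr_eq0.
rewrite rate_powE ?(gt_eqF y_gt0) // -/chernoff_rate.
rewrite ler_wpM2l ?invr_ge0 ?exprn_ge0 ?(ltW y_gt0) //.
by apply: ler_wiXn2l; [exact: chernoff_rate_ge0 | exact: ltW chernoff_rate_lt1 | lia].
Qed.

End Chernoff.

Section Probability.
Variable R : realType.
Local Open Scope ring_scope.

Lemma PE4_le1 n : PE4 R n <= 1.
Proof.
have O_gt0 : 0 < #|Omega n|%:R :> R by rewrite ltr0n card_Omega_gt0.
rewrite /PE4 ler_pdivrMr // mul1r ler_nat; apply: subset_leq_card.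
by apply/fintype.subsetP => w; rewrite inE => /andP[].
Qed.

Lemma PE4_ge n :
  1 - (99 / 100) ^- 39 * (n.+1%:R * chernoff_rate R ^+ (n %/ 14)) <= PE4 R n.
Proof.
set X := (99 / 100) ^- 39 * chernoff_rate R ^+ (n %/ 14).
have O_gt0 : 0 < #|Omega n|%:R :> R by rewrite ltr0n card_Omega_gt0.
have X_ge0 : 0 <= X.
  by rewrite mulr_ge0 ?invr_ge0 ?exprn_ge0 ?chernoff_rate_ge0 //; lra.
have sum_bad : \sum_(k < n.+1 | (45 * n <= 100 * k)%N)
    #|[set w in Omega n | (100 * La w k < 65 * k)%N]|%:R
    <= #|Omega n|%:R * X *+ n.+1.
  apply: (@le_trans _ _ (\sum_(k < n.+1) #|Omega n|%:R * X)).
    2: by rewrite sumr_const card_ord.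
  rewrite big_mkcond /=; apply: ler_sum => k _.
  case: ifP => [le_nk | _]; last by rewrite mulr_ge0 ?ler0n.
  by apply: card_La_small; rewrite // -ltnS.
have := card_Omega_le n; rewrite -(ler_nat R) natrD natr_sum => le_O.
have -> : (99 / 100) ^- 39 * (n.+1%:R * chernoff_rate R ^+ (n %/ 14)) = X * n.+1%:R.
  by rewrite mulrCA mulrC.
rewrite /PE4 ler_pdivlMr // -mulr_natr in sum_bad *.
lra.
Qed.

End Probability.

Local Open Scope classical_set_scope.
Local Open Scope ring_scope.

Lemma natrS_mul_expr_le (R : realFieldType) (r : R) j :
  0 <= r < 1 -> j.+1%:R * r ^+ j <= (1 - r)^-1.
Proof.
move=> /andP[r_ge0 r_lt1]; have r1_gt0 : 0 < 1 - r by rewrite subr_gt0.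
rewrite -[X in _ <= X]mul1r ler_pdivlMr //.
have geom : (1 - r) * \sum_(i < j.+1) r ^+ i = 1 - r ^+ j.+1.
  by rewrite -opprB mulNr -subrX1 opprB.
have le_sum : j.+1%:R * r ^+ j <= \sum_(i < j.+1) r ^+ i.
  rewrite mulr_natl -[X in _ *+ X](card_ord j.+1) -sumr_const.
  apply: ler_sum => i _.
  by apply: ler_wiXn2l; [exact: r_ge0 | exact: ltW | rewrite -ltnS].
have := ler_wpM2r (ltW r1_gt0) le_sum; rewrite [X in _ <= X]mulrC geom.
have := exprn_ge0 j.+1 r_ge0; lra.
Qed.

Lemma cvg_natrS_mul_expr_divn (R : archiRealFieldType) (r : R) d :
  0 <= r < 1 -> n.+1%:R * r ^+ (n %/ d.+1) @[n --> \oo] --> 0.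
Proof.
move=> /[dup] r01 /andP[r_ge0 r_lt1].
set D := (2 * d.+1)%N; set K := D%:R * (1 - r)^-1.
have K_gt0 : 0 < K by rewrite mulr_gt0 ?ltr0n ?invr_gt0 ?subr_gt0.
(* With j = n %/ 2(d + 1): n + 1 <= 2(d + 1)(j + 1), r^(n %/ (d + 1)) <= r^j r^j
   and (j + 1) r^j <= 1 / (1 - r). *)
have bound n : n.+1%:R * r ^+ (n %/ d.+1) <= K * r ^+ (n %/ D).
  set j := (n %/ D)%N.
  have le_nj : (n.+1 <= D * j.+1)%N by rewrite mulnC ltn_ceil.
  have le_jd : (j + j <= n %/ d.+1)%N.
    by rewrite addnn -mul2n mulnC leq_divRL // -mulnA leq_divM.
  apply: (@le_trans _ _ (D%:R * j.+1%:R * (r ^+ j * r ^+ j))).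
    rewrite -natrM -exprD ler_pM ?ler0n ?exprn_ge0 ?ler_nat //.
    by apply: ler_wiXn2l => //; exact: ltW.
  rewrite mulrA -(mulrA D%:R) ler_wpM2r ?exprn_ge0 // ler_wpM2l ?ler0n //.
  exact: natrS_mul_expr_le r01.
apply/cvgrPdist_lt => e e_gt0.
have r_norm : `|r| < 1 by rewrite ger0_norm.
have [N _ small] := (cvgrPdist_lt _ _).1 (cvg_expr r_norm) _ (divr_gt0 e_gt0 K_gt0).
exists (D * N)%N => // n /= le_n.
rewrite sub0r normrN ger0_norm ?mulr_ge0 ?exprn_ge0 //; apply: le_lt_trans (bound n) _.
have /small : (N <= n %/ D)%N by rewrite leq_divRL // mulnC.
rewrite /= sub0r normrN ger0_norm ?exprn_ge0 // => lt_rj.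
by rewrite mulrC -ltr_pdivlMr.
Qed.

Theorem lemma8 (R : realType) : PE4 R n @[n --> \oo] --> (1 : R).
Proof.
have rate01 : 0 <= chernoff_rate R < 1 by rewrite chernoff_rate_ge0 chernoff_rate_lt1.
apply: (squeeze_cvgr (h := fun=> 1)
  (f := fun n => 1 - (99 / 100) ^- 39 * (n.+1%:R * chernoff_rate R ^+ (n %/ 14)))).
- by apply: nearW => n; rewrite PE4_ge PE4_le1.
- rewrite -[X in _ --> X]subr0 -(mulr0 ((99 / 100) ^- 39)).
  apply: cvgB; first exact: cvg_cst.
  by apply: cvgMl_tmp; apply: cvg_natrS_mul_expr_divn.
- exact: cvg_cst.
Qed.
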